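(* Let $G=(V,E)$ be a finite simple undirected graph with distinct vertex IDs, whose neighborhood independence is at most a constant $c$, and let $K$ be a positive integer with $\delta(G)\ge K$. Suppose every vertex $v\in V$ selects the $K$ neighbors given by the operation $K$-Next-Modulo$(v,\Gamma(v),K)$. Then every vertex $v\in V$ is selected by at most $c\cdot K$ vertices.
   Context: $\Gamma(v)$ denotes the set of neighbors of $v$, $\deg(v)=|\Gamma(v)|$, and $\delta(G)=\min_{v}\deg(v)$. The neighborhood independence of $G$ is the maximum, over $v\in V$, of the size of an independent set of $G$ contained in $\Gamma(v)$. Operation $K$-Next-Modulo$(v,\Gamma(v),K)$: let $d=\deg(v)+1$ and let $u_1,u_2,\dots,u_d$ be the vertices of $\Gamma(v)\cup\{v\}$ listed in ascending order of ID, with $v=u_i$. Then $v$ selects the $K$ vertices $u_{i+1},u_{i+2},\dots,u_{i+K}$, indices taken cyclically modulo $d$; that is, the $K$ neighbors that immediately follow $v$ in the circular ordering of $\Gamma(v)\cup\{v\}$ by ID. All vertices make their selections simultaneously, in one round. *)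

From mathcomp Require Import all_boot.
Set Implicit Arguments. Unset Strict Implicit. Unset Printing Implicit Defensive.

(* A finite simple undirected graph on a finType T is given by a symmetric,
   irreflexive relation e. Vertex IDs are given by an injective map id : T -> nat. *)
Definition simple_graph (T : finType) (e : rel T) : Prop :=
  symmetric e /\ irreflexive e.

Definition nbhd (T : finType) (e : rel T) (v : T) : {set T} := [set u | e v u].

Definition deg (T : finType) (e : rel T) (v : T) : nat := #|nbhd e v|.

Definition independent (T : finType) (e : rel T) (S : {set T}) : Prop :=
  forall x y, x \in S -> y \in S -> ~~ e x y.

Definition nbhd_indep_le (T : finType) (e : rel T) (c : nat) : Prop :=
  forall (v : T) (S : {set T}), S \subset nbhd e v -> independent e S -> #|S| <= c.

Definition closed_nbhd_sorted (T : finType) (id : T -> nat) (e : rel T) (v : T)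
  : seq T :=
  sort (fun a b => id a <= id b) (enum (v |: nbhd e v)).

(* K-Next-Modulo(v, Gamma(v), K): v = u_i selects u_{i+1}, ..., u_{i+K},
   indices taken cyclically modulo d.  (0-based indices here.) *)
Definition next_modulo_selects (T : finType) (id : T -> nat) (e : rel T)
  (K : nat) (v u : T) : bool :=
  let s := closed_nbhd_sorted id e v in
  [exists j : 'I_K, u == nth v s ((index v s + j.+1) %% size s)].

Definition selectors (T : finType) (id : T -> nat) (e : rel T) (K : nat) (v : T)
  : {set T} := [set w | next_modulo_selects id e K w v].

(** Every selector of [v] is a neighbour of [v], and a selector [x] selects [v]
    only if fewer than [K] neighbours of [x] lie strictly between [x] and [v] in
    the cyclic order of IDs.  Ranking the selectors by their cyclic distance
    from [v], each selector is therefore adjacent to fewer than [K] selectors of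
    larger rank, so the greedy algorithm (take a selector of least rank, discard
    it and its neighbours of larger rank, repeat) discards at most [K] selectors
    per step and returns an independent subset of [Gamma(v)], of size at most
    [c]. *)

From mathcomp Require Import all_boot zify.

Set Implicit Arguments.
Unset Strict Implicit.
Unset Printing Implicit Defensive.

Lemma greedy_independent (T : finType) (e : rel T) (r : T -> nat) (K : nat)
    (S : {set T}) :
  symmetric e -> irreflexive e ->
  (forall x, x \in S -> #|[set y in S | r x <= r y & e x y]| < K) ->
  exists I : {set T}, [/\ I \subset S, independent e I & #|S| <= K * #|I|].
Proof.
move=> e_sym e_irr.
elim: {S}_.+1 {-2}S (ltnSn #|S|) => // n IH S ltSn forward_small.
have [-> | [x0 x0S]] := set_0Vmem S.
  by exists set0; rewrite sub0set cards0; split=> // x y; rewrite inE.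
have [x xS rx_min] := arg_minnP r x0S.
set F := [set y in S | r x <= r y & e x y].
set S' := S :\: (x |: F).
have S'S : S' \subset S by apply: subsetDl.
have xS' : x \notin S' by rewrite !inE eqxx.
have S'_lt : #|S'| < n.
  rewrite -ltnS; apply: leq_ltn_trans ltSn.
  by apply/proper_card/properP; split=> //; exists x.
have S'_forward y : y \in S' -> #|[set z in S' | r y <= r z & e y z]| < K.
  move=> yS'; apply: leq_ltn_trans (forward_small y (subsetP S'S y yS')).
  by apply/subset_leq_card/subsetP => z; rewrite !inE => /andP[/andP[_ ->] ->].
have [I' [I'S' indI' S'_le]] := IH S' S'_lt S'_forward.
have x_indep : forall y, y \in I' -> ~~ e x y.
  move=> y /(subsetP I'S'); rewrite !inE negb_or => /andP[/andP[_ yF] yS].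
  by apply: contra yF => exy; rewrite yS rx_min.
exists (x |: I'); split.
- by rewrite subUset sub1set (subset_trans I'S' S'S) andbT.
- move=> a b; rewrite !inE => /predU1P[-> | aI] /predU1P[-> | bI].
  + by rewrite e_irr.
  + exact: x_indep.
  + by rewrite e_sym x_indep.
  + exact: indI'.
- have xI' : x \notin I' by apply: contraNN xS' => /(subsetP I'S').
  have S_le : #|S| <= #|x |: F| + #|S'|.
    by rewrite cardsD; have := subset_leq_card (subsetIr S (x |: F)); lia.
  have xF : x \notin F by rewrite !inE e_irr !andbF.
  have xF_le : #|x |: F| <= K by rewrite cardsU1 xF; apply: forward_small.
  by rewrite cardsU1 xI' mulnSr addnC; apply: leq_trans S_le (leq_add xF_le S'_le).
Qed.

(* [b] is met strictly before [c] when counting upwards from [a], wrapping around. *)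
Definition cyclic_lt (a b c : nat) : bool :=
  [|| (a < b) && (b < c), (b < c) && (c < a) | (c < a) && (a < b)].

Lemma cyclic_lt_rotl a b c : cyclic_lt a b c = cyclic_lt b c a.
Proof. by rewrite /cyclic_lt orbC -orbA. Qed.

Definition cyclic_offset (d i a : nat) : nat := (a + d - i) %% d.

Section CyclicOffset.

Context {d i : nat}.
Hypothesis i_lt_d : i < d.

Lemma cyclic_offsetE a : a < d ->
  cyclic_offset d i a = if i <= a then a - i else a + d - i.
Proof.
move=> a_lt_d; rewrite /cyclic_offset; case: leqP => ia.
  by rewrite addnC -addnBA // modnDl modn_small //; lia.
by rewrite modn_small //; lia.
Qed.

Lemma cyclic_offsetK a : a < d -> (i + cyclic_offset d i a) %% d = a.
Proof.
move=> a_lt_d.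
by rewrite modnDmr addnC subnK ?modnDr ?modn_small // (leq_trans (ltnW i_lt_d)) ?leq_addl.
Qed.

Lemma cyclic_offset_addK k : k < d -> cyclic_offset d i ((i + k) %% d) = k.
Proof.
move=> k_lt_d; rewrite cyclic_offsetE ?ltn_mod; last lia.
have [small | wrap] := ltnP (i + k) d.
  by rewrite modn_small // leq_addr addKn.
have -> : i + k = (i + k - d) + d by rewrite subnK.
rewrite modnDr modn_small; last lia.
by case: leqP; lia.
Qed.

Lemma cyclic_ltE a b : a < d -> b < d -> a != i ->
  cyclic_lt i a b = (cyclic_offset d i a < cyclic_offset d i b).
Proof.
move=> *; rewrite /cyclic_lt !cyclic_offsetE //.
by case: (leqP i a); case: (leqP i b); lia.
Qed.

Lemma cyclic_offset_gt0 a : a < d -> (0 < cyclic_offset d i a) = (a != i).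
Proof. by move=> a_lt_d; rewrite cyclic_offsetE //; case: (leqP i a) => ?; lia. Qed.

Lemma cyclic_lt_of_offset_leq a b : a < d -> b < d -> a != i -> a != b ->
  cyclic_offset d i a <= cyclic_offset d i b -> cyclic_lt a b i.
Proof.
move=> a_lt_d b_lt_d a_neq_i a_neq_b.
rewrite -cyclic_lt_rotl /cyclic_lt !cyclic_offsetE //.
by case: (leqP i a); case: (leqP i b); lia.
Qed.

End CyclicOffset.

Section SortedByKey.

Variables (T : eqType) (f : T -> nat) (s : seq T).
Hypotheses (f_inj : {in s &, injective f}) (s_uniq : uniq s).
Hypothesis s_sorted : sorted (fun a b => f a <= f b) s.

Lemma ltn_index : {in s &, forall y z, (index y s < index z s) = (f y < f z)}.
Proof.
have le_trans : transitive (fun a b => f a <= f b) by move=> b a c; apply: leq_trans.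
have le_refl : reflexive (fun a b => f a <= f b) by move=> a; apply: leqnn.
move=> y z ys zs; apply/idP/idP => [lt_idx | lt_f].
  have le_f : f y <= f z := sorted_ltn_index le_trans s_sorted y z ys zs lt_idx.
  rewrite ltn_neqAle le_f andbT.
  by apply: contraTneq lt_idx => /f_inj-> //; rewrite ltnn.
rewrite ltnNge; apply: contraTN lt_f => le_idx; rewrite -leqNgt.
exact: sorted_leq_index le_trans le_refl _ s_sorted z y zs ys le_idx.
Qed.

Lemma cyclic_lt_index : {in s & &, forall x y z,
  cyclic_lt (f x) (f y) (f z) = cyclic_lt (index x s) (index y s) (index z s)}.
Proof. by move=> x y z xs ys zs; rewrite /cyclic_lt !ltn_index. Qed.

Lemma count_cyclic_between w k : w \in s -> k.+1 < size s ->
  count (fun y => cyclic_lt (f w) (f y) (f (nth w s ((index w s + k.+1) %% size s)))) s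
    <= k.
Proof.
move=> ws k_lt_d; set d := size s; set i := index w s; set v := nth w s _.
have d_gt0 : 0 < d by apply: leq_ltn_trans k_lt_d.
have i_lt_d : i < d by rewrite index_mem.
have vs : v \in s by rewrite mem_nth ?ltn_mod.
have idx_v : index v s = (i + k.+1) %% d by rewrite index_uniq ?ltn_mod.
rewrite -size_filter -(size_mkseq (fun m => nth w s ((i + m.+1) %% d)) k).
apply: uniq_leq_size; first exact: filter_uniq.
move=> y; rewrite mem_filter => /andP[between ys].
have p_lt_d : index y s < d by rewrite index_mem.
rewrite cyclic_lt_index // idx_v in between.
have p_neq_i : index y s != i.
  by apply: contraTneq between => ->; rewrite -/i /cyclic_lt; lia.
rewrite (cyclic_ltE i_lt_d) ?ltn_mod // cyclic_offset_addK // ltnS in between.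
have off_gt0 : 0 < cyclic_offset d i (index y s) by rewrite cyclic_offset_gt0.
apply/mapP; exists (cyclic_offset d i (index y s)).-1; first by rewrite mem_iota; lia.
by rewrite prednK // cyclic_offsetK // nth_index.
Qed.

End SortedByKey.

Section NextModulo.

Variables (T : finType) (e : rel T) (id : T -> nat) (K : nat).
Hypotheses (e_irr : irreflexive e) (id_inj : injective id).

Lemma mem_closed_nbhd_sorted v u :
  (u \in closed_nbhd_sorted id e v) = (u == v) || e v u.
Proof. by rewrite mem_sort mem_enum !inE. Qed.

Lemma closed_nbhd_sorted_uniq v : uniq (closed_nbhd_sorted id e v).
Proof. by rewrite sort_uniq enum_uniq. Qed.

Lemma closed_nbhd_sorted_sorted v :
  sorted (fun a b => id a <= id b) (closed_nbhd_sorted id e v).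
Proof. by apply: sort_sorted => a b; apply: leq_total. Qed.

Lemma size_closed_nbhd_sorted v : size (closed_nbhd_sorted id e v) = (deg e v).+1.
Proof. by rewrite size_sort -cardE cardsU1 [v \in _]inE e_irr. Qed.

Lemma next_modulo_selects_adj w v : K <= deg e w ->
  next_modulo_selects id e K w v -> e w v.
Proof.
rewrite /next_modulo_selects; set s := closed_nbhd_sorted id e w.
move=> deg_ge /existsP[j /eqP v_def].
have ws : w \in s by rewrite mem_closed_nbhd_sorted eqxx.
have d_gt0 : 0 < size s by rewrite size_closed_nbhd_sorted.
have j_lt_d : j.+1 < size s.
  by rewrite size_closed_nbhd_sorted ltnS (leq_trans (ltn_ord j)).
have vs : v \in s by rewrite v_def mem_nth ?ltn_mod.
have idx_v : index v s = (index w s + j.+1) %% size s.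
  by rewrite v_def index_uniq ?ltn_mod ?closed_nbhd_sorted_uniq.
have : 0 < cyclic_offset (size s) (index w s) (index v s).
  by rewrite idx_v cyclic_offset_addK ?index_mem.
rewrite cyclic_offset_gt0 ?index_mem // => idx_neq.
have v_neq_w : v != w by apply: contraNneq idx_neq => ->.
by move: vs; rewrite mem_closed_nbhd_sorted (negPf v_neq_w).
Qed.

Lemma next_modulo_selects_between w v : K <= deg e w ->
  next_modulo_selects id e K w v ->
  #|[set y | e w y & cyclic_lt (id w) (id y) (id v)]| < K.
Proof.
rewrite /next_modulo_selects; set s := closed_nbhd_sorted id e w.
move=> deg_ge /existsP[j /eqP ->].
have ws : w \in s by rewrite mem_closed_nbhd_sorted eqxx.
have j_lt_d : j.+1 < size s.
  by rewrite size_closed_nbhd_sorted ltnS (leq_trans (ltn_ord j)).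
apply: leq_ltn_trans (ltn_ord j).
apply: leq_trans (count_cyclic_between (in2W id_inj) (closed_nbhd_sorted_uniq w)
  (closed_nbhd_sorted_sorted w) ws j_lt_d).
rewrite -size_filter; apply: leq_trans (card_size _).
apply/subset_leq_card/subsetP => y.
by rewrite inE mem_filter mem_closed_nbhd_sorted => /andP[-> ->]; rewrite orbT.
Qed.

End NextModulo.

Theorem theorem1 (T : finType) (e : rel T) (id : T -> nat) (c K : nat) :
  simple_graph e ->
  injective id ->
  nbhd_indep_le e c ->
  0 < K ->
  (forall v : T, K <= deg e v) ->
  forall v : T, #|selectors id e K v| <= c * K.
Proof.
move=> [e_sym e_irr] id_inj indep_le _ deg_ge v.
set S := selectors id e K v.
have S_nbhd : S \subset nbhd e v.
  apply/subsetP => w; rewrite !inE => /(next_modulo_selects_adj e_irr (deg_ge w)).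
  by rewrite e_sym.
have id_neq a b : e a b -> id a != id b.
  by move=> eab; rewrite (inj_eq id_inj); apply: contraTneq eab => ->; rewrite e_irr.
pose N := (\max_u id u).+1.
have id_lt_N u : id u < N by rewrite ltnS (leq_bigmax u).
pose rank x := cyclic_offset N (id v) (id x).
have forward_small x : x \in S -> #|[set y in S | rank x <= rank y & e x y]| < K.
  move=> xS; have x_sel : next_modulo_selects id e K x v by move: xS; rewrite inE.
  apply: leq_ltn_trans (next_modulo_selects_between e_irr id_inj (deg_ge x) x_sel).
  apply/subset_leq_card/subsetP => y; rewrite !inE => /and3P[yS rank_le exy].
  have exv : e x v by rewrite e_sym; move/subsetP/(_ x xS): S_nbhd; rewrite inE.
  by rewrite exy (cyclic_lt_of_offset_leq (id_lt_N v) (id_lt_N x) (id_lt_N y)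
    (id_neq _ _ exv) (id_neq _ _ exy) rank_le).
have [I [I_S I_indep S_le]] := greedy_independent e_sym e_irr forward_small.
have I_le : #|I| <= c := indep_le v I (subset_trans I_S S_nbhd) I_indep.
by rewrite mulnC (leq_trans S_le) // leq_mul2l I_le orbT.
Qed.
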